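(* Let $a\in[-1,1)$ and $\psi_a=\mathds{1}_{[a,1]}$ on $[-1,1]$ (i.e. $\psi_a(t)=0$ for $t\in[-1,a)$ and $\psi_a(t)=1$ for $t\in[a,1]$). Write $P_{\mathcal{A}_+}(\psi_a)=\sum_{n=0}^\infty c_nt^n$ with $c_n\ge0$, and let $S(a)=\{n\in\mathbb{N}: c_n>0\}$. Then $S(a)=\{0,1,2\}$ if and only if $0<a\le\frac{1}{\sqrt5}$. Moreover, for every $a\in(0,1/\sqrt5]$, \[ P_{\mathcal{A}_+}(\psi_a)=\frac18(4-9a+5a^3)+\frac34(1-a^2)t+\frac{15}{8}(a-a^3)t^2. \]
   Context: $\mathbb{N}=\{0,1,2,\dots\}$. $\mathcal{A}_+=\{\sum_{n=0}^\infty a_nt^n : a_n\ge0,\ \text{the series converges in }L^2([-1,1])\}$ (real $L^2$ for Lebesgue measure, convergence of partial sums); it is a closed convex cone, $P_{\mathcal{A}_+}$ denotes the metric projection onto it (the unique nearest point), and every element of $\mathcal{A}_+$ has a unique representation $\sum_n c_nt^n$ with $c_n\ge0$, so $S(a)$ is well defined. *)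

From HB Require Import structures.
From mathcomp Require Import all_boot all_order all_algebra.
From mathcomp Require Import all_classical all_reals all_analysis.
Set Implicit Arguments. Unset Strict Implicit. Unset Printing Implicit Defensive.
Import Order.TTheory GRing.Theory Num.Theory.
Local Open Scope classical_set_scope.
Local Open Scope ring_scope.

Section Defs.
Variable R : realType.

Definition I11 : set R := `[(-1)%R, 1%R].

Definition L2sq (g : R -> R) : \bar R :=
  (\int[@lebesgue_measure R]_(x in I11) ((g x) ^+ 2)%:E)%E.

Definition isL2 (g : R -> R) : Prop :=
  measurable_fun I11 g /\ (L2sq g < +oo)%E.

Definition psum (c : nat -> R) (N : nat) (t : R) : R :=
  \sum_(0 <= n < N) c n * t ^+ n.

(* f is the L^2([-1,1]) limit of the series sum c_n t^n with all c_n >= 0,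
   i.e. f (as an L^2 class) belongs to the cone A_+ with coefficients c *)
Definition Aplus_rep (c : nat -> R) (f : R -> R) : Prop :=
  (forall n, 0 <= c n) /\ isL2 f /\
  ((fun N => L2sq (fun t => (psum c N t - f t)%R)) @ \oo --> 0%E).

(* c is the coefficient sequence of the metric projection P_{A_+}(psi):
   the series with coefficients c converges in L^2 to some f in A_+ which
   is a nearest point of A_+ to psi. *)
Definition proj_coeffs (psi : R -> R) (c : nat -> R) : Prop :=
  exists f, Aplus_rep c f /\
    forall c' f', Aplus_rep c' f' ->
      (L2sq (fun t => (psi t - f t)%R) <= L2sq (fun t => (psi t - f' t)%R))%E.

Definition psi (a : R) (t : R) : R := if a <= t then 1 else 0.

Definition supp (c : nat -> R) : set nat := [set n | 0 < c n].

End Defs.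

From HB Require Import structures.
From mathcomp Require Import all_boot all_order all_algebra.
From mathcomp Require Import all_classical all_reals all_analysis.
From mathcomp Require Import measurable_realfun.
From mathcomp Require Import lra ring.
Set Implicit Arguments. Unset Strict Implicit. Unset Printing Implicit Defensive.
Import Order.TTheory GRing.Theory Num.Theory.
Import numFieldNormedType.Exports.
Local Open Scope classical_set_scope.
Local Open Scope ring_scope.

(* The projection f = P_{A_+}(g) onto the closed convex cone A_+ is
   characterised by variational inequalities: with u = g - f, one has
   <u, t^n> <= 0 for all n, with equality whenever c_n > 0, and <u, f> >= 0;
   conversely an element of A_+ satisfying them coincides with f. For
   g = psi_a every inner product is a combination of the moments
   int_{-1}^1 t^k and int_a^1 t^k. If S(a) = {0,1,2}, the equalities for
   n <= 2 determine c_0, c_1, c_2, and c_2 > 0 together with the inequality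
   for n = 3 force 0 < a and 5 a^2 <= 1. Conversely, for such a the quadratic
   q with the stated coefficients lies in A_+, its residual moments vanish for
   n <= 2, are nonpositive for n = 3 and negative for n >= 4; hence q = f,
   c_n = 0 for n >= 4, and the invertibility of the Gram matrix of
   1, t, t^2, t^3 identifies c_0, ..., c_3. *)

Lemma le0_of_small (R : realFieldType) (x K d : R) : 0 < d ->
  (forall e, 0 < e -> e < d -> x <= e * K) -> x <= 0.
Proof.
move=> d0 H; rewrite leNgt; apply/negP => x0.
have K1 : 0 < `|K| + 1 by rewrite ltr_wpDl.
pose e := Num.min (d / 2) (x / (`|K| + 1)).
have e0 : 0 < e by rewrite lt_min !divr_gt0.
have ed : e < d by rewrite gt_min ltr_pdivrMr //; lra.
have ex : e * (`|K| + 1) <= x by rewrite -ler_pdivlMr // ge_min lexx orbT.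
have := H e e0 ed; have : e * K <= e * `|K| by rewrite ler_pM2l // ler_norm.
nra.
Qed.

Lemma big_nat3 (V : nmodType) (F : nat -> V) :
  \sum_(0 <= j < 3) F j = F 0%N + F 1%N + F 2%N.
Proof. by rewrite !big_nat_recr //= big_geq // add0r. Qed.

Lemma big_nat4 (V : nmodType) (F : nat -> V) :
  \sum_(0 <= j < 4) F j = F 0%N + F 1%N + F 2%N + F 3%N.
Proof. by rewrite big_nat_recr //= big_nat3. Qed.

Section Moments.
Variable R : realFieldType.

Definition moment (k : nat) : R := (1 - (-1) ^+ k.+1) / k.+1%:R.

Definition psi_moment (a : R) (k : nat) : R := (1 - a ^+ k.+1) / k.+1%:R.

(* The L^2([-1,1]) inner product of psi_a - sum_(j < K) d_j t^j with t^n,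
   see [dotL2_resid]. *)
Definition resid_moment (a : R) (d : nat -> R) (K n : nat) : R :=
  psi_moment a n - \sum_(0 <= j < K) d j * moment (j + n).

Definition proj_coef (a : R) (n : nat) : R :=
  match n with
  | 0 => (4 - 9 * a + 5 * a ^+ 3) / 8
  | 1 => 3 / 4 * (1 - a ^+ 2)
  | 2 => 15 / 8 * (a - a ^+ 3)
  | _ => 0
  end.

Lemma moment_even m : moment m.*2 = 2 / (m.*2).+1%:R.
Proof. by rewrite /moment -signr_odd /= odd_double /= expr1 opprK. Qed.

Lemma moment_odd m : moment m.*2.+1 = 0.
Proof. by rewrite /moment -signr_odd /= odd_double /= expr0 subrr mul0r. Qed.

Lemma moment_table :
  [/\ moment 0 = 2, moment 2 = 2 / 3, moment 4 = 2 / 5 & moment 6 = 2 / 7].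
Proof.
by rewrite (moment_even 0) (moment_even 1) (moment_even 2) (moment_even 3) divr1.
Qed.

Lemma moment_gram_inj (d d' : nat -> R) :
  (forall k, (k < 4)%N -> \sum_(0 <= j < 4) d j * moment (j + k) =
                          \sum_(0 <= j < 4) d' j * moment (j + k)) ->
  forall j, (j < 4)%N -> d j = d' j.
Proof.
move=> E; have [m0 m2 m4 m6] := moment_table.
have := E 0%N isT; have := E 1%N isT; have := E 2%N isT; have := E 3%N isT.
rewrite !big_nat4 /= !(moment_odd 0) !(moment_odd 1) !(moment_odd 2) m0 m2 m4 m6.
move=> E3 E2 E1 E0.
by case=> [|[|[|[|]]]] // _; lra.
Qed.

Definition odd_numer (x : R) (k : nat) : R :=
  3 * k%:R * (1 - x) - (k.*2.+1)%:R * (1 - x ^+ k).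

Lemma resid_proj_small a n : (n <= 2)%N -> resid_moment a (proj_coef a) 3 n = 0.
Proof.
rewrite /resid_moment big_nat3 /psi_moment /moment.
by case: n => [|[|[|]]] // _ /=; rewrite !exprS !expr0; field.
Qed.

Lemma resid_proj_odd a m : resid_moment a (proj_coef a) 3 m.*2.+1 =
  - odd_numer (a ^+ 2) m.+1 / (2 * m.+1%:R * (m.+1.*2.+1)%:R).
Proof.
rewrite /resid_moment big_nat3 /= add0n !addSn -!doubleS !moment_odd !moment_even.
rewrite /psi_moment /odd_numer -doubleS -mul2n exprM.
have e1 : ((2 * m.+1)%N%:R : R) = 2 * m.+1%:R by rewrite natrM.
have e2 : ((2 * m.+1).+1%:R : R) = 2 * m.+1%:R + 1 by rewrite -natr1 e1.
rewrite mul2n in e1 e2; rewrite !mul2n e1 e2.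
have : 0 < m.+1%:R :> R by exact: ltr0Sn.
by move=> ?; field; lra.
Qed.

Lemma resid_proj_even a m :
  resid_moment a (proj_coef a) 3 m.*2 * (4 * ((m.*2)%:R + 1) * ((m.*2)%:R + 3)) =
  - a * (4 * ((m.*2)%:R + 3) * a ^+ m.*2 + 6 * (m.*2)%:R - 12
         - 10 * (m.*2)%:R * a ^+ 2).
Proof.
rewrite /resid_moment big_nat3 /= add0n !addSn -!doubleS !moment_odd !moment_even.
rewrite /psi_moment exprS.
have -> : ((m.+1).*2.+1%:R : R) = (m.*2)%:R + 3 by rewrite doubleS -!natr1; ring.
rewrite -natr1.
have : 0 <= (m.*2)%:R :> R by exact: ler0n.
by move=> ?; field; lra.
Qed.

Lemma odd_numer2 x : odd_numer x 2 = (1 - x) * (1 - 5 * x).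
Proof. by rewrite /odd_numer -[2.*2.+1]/(5%N) expr2; ring. Qed.

Lemma mul_expr_le_fifth (x : R) k : 0 <= x -> 5 * x <= 1 -> (2 <= k)%N ->
  5 * ((k.*2.+1)%:R * x ^+ k) <= 1.
Proof.
move=> x0 x5; elim: k => [//|k IH]; rewrite leq_eqVlt => /orP [/eqP <-|].
  by rewrite -[2.*2.+1]/(5%N) expr2; nra.
rewrite ltnS => /IH {}IH.
have -> : (k.+1.*2.+1)%:R = (k.*2.+1)%:R + 2 :> R.
  by rewrite doubleS -!natr1; ring.
have K1 : 1 <= (k.*2.+1)%:R :> R by rewrite ler1n.
have y0 : 0 <= x ^+ k := exprn_ge0 k x0.
rewrite exprS; set K := (k.*2.+1)%:R in IH K1 *; set y := x ^+ k in IH y0 *.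
have : 0 <= (K + 2) * y by apply: mulr_ge0 => //; lra.
nra.
Qed.

Lemma odd_numer_gt0 (x : R) k : 0 <= x -> 5 * x <= 1 -> (3 <= k)%N ->
  0 < odd_numer x k.
Proof.
move=> x0 x5.
have step j : (2 <= j)%N -> odd_numer x j < odd_numer x j.+1.
  move=> j2; have := mul_expr_le_fifth x0 x5 j2.
  have E : odd_numer x j.+1 - odd_numer x j =
      1 - 3 * x + 2 * x ^+ j.+1 - (j.*2.+1)%:R * x ^+ j * (1 - x).
    by rewrite /odd_numer doubleS -!natr1 exprS; ring.
  have := exprn_ge0 j.+1 x0; have y0 := exprn_ge0 j x0.
  have Ky0 : 0 <= (j.*2.+1)%:R * x ^+ j by apply: mulr_ge0.
  have := mulr_ge0 Ky0 x0.
  set K := (j.*2.+1)%:R in E Ky0 *; set y := x ^+ j in E y0 Ky0 *.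
  rewrite exprS -/y in E *; nra.
elim: k => [//|k IH]; rewrite leq_eqVlt => /orP [/eqP [<-]|].
  by apply: le_lt_trans (step 2%N isT); rewrite odd_numer2; nra.
by rewrite ltnS => k3; apply: lt_trans (IH k3) (step k _); apply: ltnW.
Qed.

Lemma resid_proj_lt0 a n : 0 < a -> 5 * a ^+ 2 <= 1 -> (4 <= n)%N ->
  resid_moment a (proj_coef a) 3 n < 0.
Proof.
move=> a0 a5.
have [m [->|->]] : exists m, n = m.*2 \/ n = m.*2.+1.
  by exists n./2; rewrite -{1 3}(odd_double_half n); case: (odd n); [right|left].
- rewrite -[4%N]/(2.*2) leq_double => m2.
  have N4 : 4 <= (m.*2)%:R :> R by rewrite -[4]/((2.*2)%:R) ler_nat leq_double.
  have := resid_proj_even a m; have := exprn_ge0 m.*2 (ltW a0).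
  set N := (m.*2)%:R in N4 *; set Y := a ^+ m.*2 => Y0 E.
  have D0 : 0 < 4 * (N + 1) * (N + 3) by apply: mulr_gt0; [apply: mulr_gt0|]; lra.
  (* 10 N a^2 <= 2 N, so the bracket is at least 4 N - 12 > 0 *)
  have B0 : 0 < 4 * (N + 3) * Y + 6 * N - 12 - 10 * N * a ^+ 2.
    have : 0 <= 4 * (N + 3) * Y by apply: mulr_ge0 => //; lra.
    nra.
  rewrite -(pmulr_llt0 _ D0) E mulNr oppr_lt0; exact: mulr_gt0.
- rewrite ltnS -[3%N]/(1.*2.+1) ltn_double => m2.
  rewrite resid_proj_odd mulNr oppr_lt0; apply: divr_gt0.
    by apply: odd_numer_gt0 => //; rewrite ?sqr_ge0 // ltnS.
  by apply: mulr_gt0; [apply: mulr_gt0|]; rewrite ?ltr0Sn ?ltr0n.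
Qed.

Lemma resid_proj_le0 a n : 0 < a -> 5 * a ^+ 2 <= 1 ->
  resid_moment a (proj_coef a) 3 n <= 0.
Proof.
move=> a0 a5; case: (ltnP n 4) => [n3|]; last by move/(resid_proj_lt0 a0 a5)/ltW.
have [n2|n2] := leqP n 2; first by rewrite resid_proj_small.
have -> : n = 3%N by apply/eqP; rewrite eqn_leq -ltnS n3 n2.
rewrite (resid_proj_odd _ 1) odd_numer2 mulNr oppr_le0.
have := sqr_ge0 a; rewrite -expr2 => ?.
by apply: divr_ge0; [apply: mulr_ge0; lra | rewrite !mulr_ge0 ?ler0n].
Qed.

Lemma proj_coef_gt0 a n : 0 < a -> 5 * a ^+ 2 <= 1 -> (n <= 2)%N ->
  0 < proj_coef a n.
Proof.
move=> a0 a5; have a1 : a < 3 / 5 by apply: contra_leT a5 => ?; nra.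
case: n => [|[|[|]]] //= _.
- have -> : 4 - 9 * a + 5 * a ^+ 3 = (1 - a) * (4 - 5 * a - 5 * a ^+ 2) by ring.
  by apply: divr_gt0 => //; apply: mulr_gt0; lra.
- by apply: mulr_gt0; lra.
- have -> : a - a ^+ 3 = a * (1 - a ^+ 2) by ring.
  by apply: mulr_gt0; [|apply: mulr_gt0]; lra.
Qed.

Lemma resid_quadratic_bound a (d : nat -> R) : -1 <= a < 1 -> 0 < d 2%N ->
  (forall n, (n <= 2)%N -> resid_moment a d 3 n = 0) ->
  resid_moment a d 3 3 <= 0 -> 0 < a /\ 5 * a ^+ 2 <= 1.
Proof.
move=> /andP [am1 a1] d2 E I3; have [m0 m2 m4 _] := moment_table.
have := E 0%N isT; have := E 1%N isT; have := E 2%N isT; move: I3.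
rewrite /resid_moment /psi_moment !big_nat3 /= !(moment_odd 0) !(moment_odd 1).
rewrite !(moment_odd 2) m0 m2 m4 !divr1 => I3 E2 E1 E0.
have d1E : d 1%N = 3 / 4 * (1 - a ^+ 2) by lra.
have d2E : d 2%N = 15 / 8 * (a - a ^+ 3) by lra.
have a0 : 0 < a.
  rewrite ltNge; apply/negP => a0; move: d2; rewrite d2E.
  have -> : a - a ^+ 3 = a * ((1 - a) * (1 + a)) by ring.
  have : a * ((1 - a) * (1 + a)) <= 0 by apply: mulr_le0_ge0 => //; nra.
  lra.
split=> //; have : 0 < 1 - a ^+ 2 by nra.
nra.
Qed.

End Moments.

Lemma le_inv_sqrt5 (R : rcfType) (a : R) : 0 <= a ->
  (a <= 1 / Num.sqrt 5) = (5 * a ^+ 2 <= 1).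
Proof.
move=> a0; have s0 : 0 < Num.sqrt (5 : R) by rewrite sqrtr_gt0 ltr0n.
have as0 : 0 <= a * Num.sqrt 5 by rewrite mulr_ge0 // ltW.
rewrite ler_pdivlMr // -(ler_pXn2r (n := 2)) ?nnegrE //.
by rewrite exprMn sqr_sqrtr ?ler0n // expr1n mulrC.
Qed.

Section L2.
Variable R : realType.
Notation mu := (@lebesgue_measure R).
Notation I := (@I11 R).

Definition dotL2 (g h : R -> R) : R := \int[mu]_(x in I) (g x * h x).

Local Notation sqL2 g := (dotL2 g g).
Local Notation mono n := (fun x : R => x ^+ n).

Lemma Rintegral_itv_exprn (l r : R) k : l < r ->
  \int[mu]_(x in `[l, r]) x ^+ k = (r ^+ k.+1 - l ^+ k.+1) / k.+1%:R.
Proof.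
move=> lr; have cF : continuous (fun x : R => k.+1%:R^-1 * x ^+ k.+1).
  by move=> x; apply: cvgM; [exact: cvg_cst | exact: exprn_continuous].
rewrite /Rintegral (@continuous_FTC2 _ _ (fun x => k.+1%:R^-1 * x ^+ k.+1)) //=.
- by rewrite -mulrBr mulrC.
- by apply: continuous_subspaceT => x; exact: exprn_continuous.
- split; [move=> x _; apply: derivableM; [exact: derivable_cst | exact: exprn_derivable]
        | exact: cvg_at_right_filter (cF l) | exact: cvg_at_left_filter (cF r)].
- move=> x _; rewrite derive1Ml; last exact: exprn_derivable.
  by rewrite exp_derive1 /= mulrA mulVf ?mul1r.
Qed.

Lemma measurable_I11 : measurable (I : set (measurableTypeR R)).
Proof. exact: measurable_itv. Qed.

Lemma lebesgue_I11_lty : (mu I < +oo)%E.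
Proof. by rewrite /I11 lebesgue_measure_itv /=; case: ifP; rewrite // -EFinD ltry. Qed.

Lemma integrableD_EFin (f g : R -> R) : mu.-integrable I (EFin \o f) ->
  mu.-integrable I (EFin \o g) -> mu.-integrable I (EFin \o (fun x => f x + g x)).
Proof.
move=> If Ig.
exact: (eq_integrable measurable_I11 _ _ _ (integrableD measurable_I11 If Ig)).
Qed.

Lemma integrableZ_EFin (k : R) (f : R -> R) : mu.-integrable I (EFin \o f) ->
  mu.-integrable I (EFin \o (fun x => k * f x)).
Proof.
move=> If.
exact: (eq_integrable measurable_I11 _ _ _ (integrableZl measurable_I11 k If)).
Qed.

Lemma isL2P (g : R -> R) : isL2 g <->
  measurable_fun I g /\ mu.-integrable I (EFin \o (fun x => g x ^+ 2)).
Proof.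
have E : (\int[mu]_(x in I) `|(g x ^+ 2)%:E| = L2sq g)%E.
  by apply: eq_integral => x _; rewrite gee0_abs ?lee_fin ?sqr_ge0.
split=> [[mg lt] | [mg /integrableP [_ lt]]]; split => //; last by rewrite -E.
apply/integrableP; split; last by rewrite E.
by apply/measurable_EFinP; exact: measurable_funX.
Qed.

Lemma integrable_mulL2 (g h : R -> R) : isL2 g -> isL2 h ->
  mu.-integrable I (EFin \o (fun x => g x * h x)).
Proof.
move=> /isL2P [mg ig] /isL2P [mh ih].
apply: (le_integrable measurable_I11 _ _ (integrableD_EFin ig ih)).
  by apply/measurable_EFinP; exact: measurable_funM.
move=> x _ /=; rewrite lee_fin [X in _ <= X]ger0_norm ?addr_ge0 ?sqr_ge0 //.
rewrite normrM -(real_normK (num_real (g x))) -(real_normK (num_real (h x))).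
have := normr_ge0 (g x); have := normr_ge0 (h x); nra.
Qed.

Lemma isL2D (g h : R -> R) : isL2 g -> isL2 h -> isL2 (fun x => g x + h x).
Proof.
move=> Lg Lh; have igh := integrable_mulL2 Lg Lh.
move: Lg Lh => /isL2P [mg ig] /isL2P [mh ih]; apply/isL2P; split.
  exact: measurable_funD.
have := integrableD_EFin ig (integrableD_EFin (integrableZ_EFin 2 igh) ih).
by apply: eq_integrable measurable_I11 _ _ _ => x _ /=; congr EFin; ring.
Qed.

Lemma isL2Z (k : R) (g : R -> R) : isL2 g -> isL2 (fun x => k * g x).
Proof.
move=> /isL2P [mg ig]; apply/isL2P; split.
  by apply: measurable_funM => //; exact: measurable_cst.
apply: eq_integrable measurable_I11 _ _ _ (integrableZ_EFin (k ^+ 2) ig).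
by move=> x _ /=; congr EFin; ring.
Qed.

Lemma isL2B (g h : R -> R) : isL2 g -> isL2 h -> isL2 (fun x => g x - h x).
Proof.
move=> Lg Lh; have := isL2D Lg (isL2Z (-1) Lh).
by congr isL2; apply: funext => x; ring.
Qed.

Lemma isL2_bounded (g : R -> R) (M : R) : measurable_fun I g ->
  (forall x, I x -> `|g x| <= M) -> isL2 g.
Proof.
move=> mg gM; apply/isL2P; split => //.
apply: measurable_bounded_integrable measurable_I11 lebesgue_I11_lty _ _.
  exact: measurable_funX.
exists (M ^+ 2); split; first by rewrite num_real.
move=> M' MM' x Ix /=; rewrite ger0_norm ?sqr_ge0 //; apply/ltW/(le_lt_trans _ MM').
rewrite -(real_normK (num_real (g x))) ler_pXn2r ?nnegrE ?normr_ge0 ?gM //.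
exact: le_trans (gM x Ix).
Qed.

Lemma isL2_exprn n : isL2 (mono n).
Proof.
apply: (@isL2_bounded _ 1); first exact: exprn_measurable.
move=> x; rewrite /I11 /= in_itv /= => /andP [x1 x2].
by rewrite normrX exprn_ile1 // ler_norml x1 x2.
Qed.

Lemma psiE (a : R) : psi a = cst (1 : R) \_ `[a, +oo[.
Proof. by apply: funext => x; rewrite /psi patchE mem_setE in_itv /= andbT. Qed.

Lemma isL2_psi (a : R) : isL2 (psi a).
Proof.
apply: (@isL2_bounded _ 1).
  by rewrite psiE; apply/measurable_restrict => //; exact: measurable_I11.
by move=> x _; rewrite /psi; case: ifP; rewrite ?normr1 ?normr0.
Qed.

Lemma psumS (c : nat -> R) N t : psum c N.+1 t = psum c N t + c N * t ^+ N.
Proof. by rewrite /psum big_nat_recr. Qed.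

Lemma isL2_psum (c : nat -> R) N : isL2 (psum c N).
Proof.
elim: N => [|N IH].
  have := isL2Z 0 (isL2_exprn 0); congr isL2; apply: funext => x.
  by rewrite /psum big_geq ?mul0r.
have := isL2D IH (isL2Z (c N) (isL2_exprn N)); congr isL2.
by apply: funext => x; rewrite psumS.
Qed.

#[local] Hint Resolve isL2_exprn isL2_psi isL2_psum : core.

Lemma dotL2C g h : dotL2 g h = dotL2 h g.
Proof. by apply: eq_Rintegral => x _; rewrite mulrC. Qed.

Lemma dotL2Dl (g1 g2 h : R -> R) : isL2 g1 -> isL2 g2 -> isL2 h ->
  dotL2 (fun x => g1 x + g2 x) h = dotL2 g1 h + dotL2 g2 h.
Proof.
move=> L1 L2 Lh; rewrite -RintegralD ?integrable_mulL2 //; last exact: measurable_I11.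
by apply: eq_Rintegral => x _; rewrite mulrDl.
Qed.

Lemma dotL2Zl (k : R) (g h : R -> R) : isL2 g -> isL2 h ->
  dotL2 (fun x => k * g x) h = k * dotL2 g h.
Proof.
move=> Lg Lh; rewrite -RintegralZl ?integrable_mulL2 //; last exact: measurable_I11.
by apply: eq_Rintegral => x _; rewrite mulrA.
Qed.

Lemma dotL2Zr (k : R) (g h : R -> R) : isL2 g -> isL2 h ->
  dotL2 g (fun x => k * h x) = k * dotL2 g h.
Proof. by move=> Lg Lh; rewrite dotL2C dotL2Zl // dotL2C. Qed.

Lemma dotL2Bl (g1 g2 h : R -> R) : isL2 g1 -> isL2 g2 -> isL2 h ->
  dotL2 (fun x => g1 x - g2 x) h = dotL2 g1 h - dotL2 g2 h.
Proof.
move=> L1 L2 Lh; rewrite -RintegralB ?integrable_mulL2 //; last exact: measurable_I11.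
by apply: eq_Rintegral => x _; rewrite mulrBl.
Qed.

Lemma dotL2Br (g h1 h2 : R -> R) : isL2 g -> isL2 h1 -> isL2 h2 ->
  dotL2 g (fun x => h1 x - h2 x) = dotL2 g h1 - dotL2 g h2.
Proof. by move=> Lg L1 L2; rewrite dotL2C dotL2Bl // !(dotL2C g). Qed.

Lemma sqL2_ge0 g : 0 <= sqL2 g.
Proof. by apply: Rintegral_ge0 => x _; rewrite -expr2 sqr_ge0. Qed.

Lemma L2sqE g : isL2 g -> L2sq g = (sqL2 g)%:E.
Proof.
move=> Lg; rewrite /dotL2 /Rintegral fineK.
  by apply: eq_integral => x _; rewrite expr2.
exact: (integrable_fin_num measurable_I11 (integrable_mulL2 Lg Lg)).
Qed.

Lemma sqL2D g h (e : R) : isL2 g -> isL2 h ->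
  sqL2 (fun x => g x + e * h x) = sqL2 g + 2 * e * dotL2 g h + e ^+ 2 * sqL2 h.
Proof.
move=> Lg Lh; have Leh := isL2Z e Lh; have Lgeh := isL2D Lg Leh.
rewrite dotL2Dl // dotL2Zl // !(dotL2C _ (fun x => g x + e * h x)).
by rewrite !dotL2Dl // !dotL2Zl // (dotL2C h g); ring.
Qed.

Lemma dotL2_young g h (e : R) : isL2 g -> isL2 h -> 0 <= e ->
  2 * e * `|dotL2 g h| <= sqL2 g + e ^+ 2 * sqL2 h.
Proof.
move=> Lg Lh e0.
have := sqL2_ge0 (fun x => g x + e * h x); have := sqL2_ge0 (fun x => g x + - e * h x).
rewrite !sqL2D // sqrrN.
by case: (lerP 0 (dotL2 g h)) => [/ger0_norm|/ltr0_norm] ->; nra.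
Qed.

Lemma dotL2_eq0 g h : isL2 g -> isL2 h -> sqL2 g = 0 -> dotL2 g h = 0.
Proof.
move=> Lg Lh g0; apply/normr0_eq0/eqP; rewrite eq_le normr_ge0 andbT.
apply: (le0_of_small (K := sqL2 h / 2) (d := 1)) => // e e0 _.
by have := dotL2_young Lg Lh (ltW e0); rewrite g0 add0r; nra.
Qed.

Lemma dotL2_exprn j k : dotL2 (mono j) (mono k) = moment R (j + k).
Proof.
rewrite /dotL2 (@eq_Rintegral _ _ _ mu _ (mono (j + k))).
  by rewrite /I11 Rintegral_itv_exprn ?ltrN10 // expr1n.
by move=> x _; rewrite exprD.
Qed.

Lemma dotL2_psi_exprn a k : -1 <= a < 1 -> dotL2 (psi a) (mono k) = psi_moment a k.
Proof.
move=> /andP [a1 a2].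
have aI : I `&` [set` `[a, +oo[] = [set` `[a, 1]].
  apply/seteqP; split => x; rewrite /I11 /= !in_itv /= ?andbT.
    by move=> [/andP [_ ->] ->].
  by move=> /andP [ax ->]; rewrite ax; split => //; apply/andP; split => //; lra.
rewrite /dotL2 (@eq_Rintegral _ _ _ mu _ ((mono k) \_ [set` `[a, +oo[])); last first.
  by move=> x _; rewrite psiE !patchE; case: ifP; rewrite ?mul1r ?mul0r.
by rewrite -Rintegral_mkcondr aI Rintegral_itv_exprn // expr1n.
Qed.

Lemma dotL2_psum (c : nat -> R) N h : isL2 h ->
  dotL2 (psum c N) h = \sum_(0 <= j < N) c j * dotL2 (mono j) h.
Proof.
move=> Lh; elim: N => [|N IH].
  rewrite big_geq // /dotL2 (@eq_Rintegral _ _ _ mu _ (fun=> 0)).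
    by rewrite Rintegral_cst ?mul0r //; exact: measurable_I11.
  by move=> x _; rewrite /psum big_geq ?mul0r.
have -> : psum c N.+1 = (fun x => psum c N x + c N * x ^+ N).
  by apply: funext => x; rewrite psumS.
rewrite big_nat_recr //= -IH dotL2Dl ?dotL2Zl //; exact: isL2Z.
Qed.

Lemma dotL2_psum_exprn (c : nat -> R) N k :
  dotL2 (psum c N) (mono k) = \sum_(0 <= j < N) c j * moment R (j + k).
Proof.
by rewrite dotL2_psum //; apply: eq_bigr => j _; rewrite dotL2_exprn.
Qed.

Lemma dotL2_resid a (d : nat -> R) K n : -1 <= a < 1 ->
  dotL2 (fun t => psi a t - psum d K t) (mono n) = resid_moment a d K n.
Proof.
by move=> a11; rewrite dotL2Bl ?dotL2_psi_exprn ?dotL2_psum_exprn.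
Qed.

Lemma psum_trunc (c : nat -> R) K N t : (forall n, (K <= n)%N -> c n = 0) ->
  (K <= N)%N -> psum c N t = psum c K t.
Proof.
move=> cK; elim: N => [|N IH]; first by rewrite leqn0 => /eqP ->.
rewrite leq_eqVlt => /orP [/eqP <- // | KN].
by rewrite psumS IH // cK // mul0r addr0.
Qed.

Lemma psum_shift (c : nat -> R) n e N t : (n < N)%N ->
  psum (fun m => c m + (if m == n then e else 0)) N t = psum c N t + e * t ^+ n.
Proof.
elim: N => [//|N IH]; rewrite ltnS leq_eqVlt => /orP [/eqP <-|nN].
  rewrite !psumS eqxx mulrDl addrA; congr (_ + _ + _).
  by apply: eq_big_nat => m /andP [_ mn]; rewrite ifN ?addr0 // ltn_eqF.
by rewrite !psumS IH // ifN ?addr0 1?eq_sym ?ltn_eqF // addrAC.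
Qed.

Lemma Aplus_repP (c : nat -> R) f : Aplus_rep c f <->
  [/\ forall n, 0 <= c n, isL2 f &
      (fun N => sqL2 (fun t => psum c N t - f t)) @ \oo --> 0].
Proof.
suff E : isL2 f -> (fun N => L2sq (fun t => psum c N t - f t)) =
                   (fun N => (sqL2 (fun t => psum c N t - f t))%:E).
  split=> [[c0 [Lf H]] | [c0 Lf H]].
    by rewrite E // in H; split => //; exact: (fine_cvg H).
  split=> //; split=> //; rewrite E //; apply: cvg_EFin => //; exact: nearW.
by move=> Lf; apply: funext => N; rewrite L2sqE //; exact: isL2B (isL2_psum c N) Lf.
Qed.

Lemma Aplus_rep_psum (d : nat -> R) K : (forall n, 0 <= d n) ->
  (forall n, (K <= n)%N -> d n = 0) -> Aplus_rep d (psum d K).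
Proof.
move=> d0 dK; apply/Aplus_repP; split => //.
apply: cvg_near_cst; exists K => // N /= KN.
rewrite /dotL2 (@eq_Rintegral _ _ _ mu _ (fun=> 0)).
  by rewrite Rintegral_cst ?mul0r //; exact: measurable_I11.
by move=> x _; rewrite (psum_trunc _ dK KN) subrr mul0r.
Qed.

Lemma Aplus_rep_dot_trunc (c : nat -> R) f K : Aplus_rep c f ->
  (forall n, (K <= n)%N -> c n = 0) ->
  forall h, isL2 h -> dotL2 f h = dotL2 (psum c K) h.
Proof.
move=> /Aplus_repP [_ Lf H] cK h Lh; have LK := isL2_psum c K.
have Q0 : sqL2 (fun t => psum c K t - f t) = 0.
  have ev : \forall N \near \oo, sqL2 (fun t => psum c N t - f t) =
                                sqL2 (fun t => psum c K t - f t).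
    exists K => // N /= KN.
    by congr dotL2; apply: funext => t; rewrite (psum_trunc _ cK KN).
  exact: (cvg_unique _ (cvg_near_cst _ ev) H).
have := dotL2_eq0 (isL2B LK Lf) Lh Q0; rewrite dotL2Bl //; lra.
Qed.

(* v is nonpositive on the partial sums, which converge to f. *)
Lemma Aplus_rep_dot_le0 v (c : nat -> R) f : isL2 v ->
  (forall n, dotL2 v (mono n) <= 0) -> Aplus_rep c f -> dotL2 v f <= 0.
Proof.
move=> Lv vn /Aplus_repP [c0 Lf H].
apply: (le0_of_small (K := (1 + sqL2 v) / 2) (d := 1)) => // e e0 _.
have [N _ /(_ N (leqnn N)) /= QN] := cvgr_lt 0 H (e ^+ 2) (exprn_gt0 2 e0).
set w := fun t => psum c N t - f t; have Lw : isL2 w := isL2B (isL2_psum c N) Lf.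
have vN : dotL2 v (psum c N) <= 0.
  rewrite dotL2C dotL2_psum //; apply: sumr_le0 => j _.
  by rewrite dotL2C; apply: mulr_ge0_le0.
have vf : dotL2 v f = dotL2 v (psum c N) - dotL2 w v.
  by rewrite dotL2Bl // (dotL2C (psum c N)) (dotL2C f); ring.
have := dotL2_young Lw Lv (ltW e0); have := ler_norm (- dotL2 w v).
rewrite normrN vf; nra.
Qed.

Lemma Aplus_rep_shift (c : nat -> R) f n (e : R) : Aplus_rep c f -> 0 <= c n + e ->
  Aplus_rep (fun m => c m + (if m == n then e else 0)) (fun t => f t + e * t ^+ n).
Proof.
move=> /Aplus_repP [c0 Lf H] cn; apply/Aplus_repP; split.
- by move=> m; case: eqP => [->|_]; rewrite ?addr0.
- exact: isL2D Lf (isL2Z e (isL2_exprn n)).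
apply: cvg_trans H; apply: near_eq_cvg; exists n.+1 => // N /= nN.
by congr dotL2; apply: funext => t; rewrite psum_shift //; ring.
Qed.

Lemma Aplus_repZ (c : nat -> R) f (s : R) : 0 <= s -> Aplus_rep c f ->
  Aplus_rep (fun m => s * c m) (fun t => s * f t).
Proof.
move=> s0 /Aplus_repP [c0 Lf H]; apply/Aplus_repP; split.
- by move=> m; apply: mulr_ge0.
- exact: isL2Z.
have sH : (fun N => s ^+ 2 * sqL2 (fun t => psum c N t - f t)) @ \oo --> 0.
  by rewrite -(mulr0 (s ^+ 2)); apply: cvgM => //; exact: cvg_cst.
apply: cvg_trans sH; apply: near_eq_cvg; apply: nearW => N /=.
have Lw := isL2B (isL2_psum c N) Lf.
set w := fun t => psum c N t - f t in Lw *.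
have -> : (fun t => psum (fun m => s * c m) N t - s * f t) = (fun t => s * w t).
  apply: funext => t; rewrite /w mulrBr /psum mulr_sumr; congr (_ - _).
  by apply: eq_bigr => m _; rewrite mulrA.
rewrite dotL2Zl //; last exact: isL2Z.
by rewrite dotL2Zr // mulrA -expr2.
Qed.

Definition is_proj_Aplus (g : R -> R) (c : nat -> R) (f : R -> R) : Prop :=
  Aplus_rep c f /\ forall (c' : nat -> R) f', Aplus_rep c' f' ->
    (L2sq (fun t => (g t - f t)%R) <= L2sq (fun t => (g t - f' t)%R))%E.

Section Projection.
Variables (g : R -> R) (c : nat -> R) (f : R -> R).
Hypothesis Lg : isL2 g.
Hypothesis f_proj : is_proj_Aplus g c f.

Let hA : Aplus_rep c f := f_proj.1.
Let c_ge0 n : 0 <= c n. Proof. by case: hA. Qed.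
Let Lf : isL2 f. Proof. by case: hA => _ []. Qed.
Let Lu : isL2 (fun t => g t - f t). Proof. exact: isL2B. Qed.

Lemma proj_perturb c' h (e : R) : isL2 h ->
  Aplus_rep c' (fun t => f t + e * h t) ->
  2 * e * dotL2 (fun t => g t - f t) h <= e ^+ 2 * sqL2 h.
Proof.
move=> Lh hA'; have /f_proj.2 := hA'.
have Lf' : isL2 (fun t => f t + e * h t) by case: hA' => _ [].
rewrite !L2sqE ?lee_fin //; last exact: isL2B Lg Lf'.
have -> : (fun t => g t - (f t + e * h t)) = (fun t => g t - f t + - e * h t).
  by apply: funext => t; ring.
by rewrite sqL2D // sqrrN; lra.
Qed.

Lemma proj_dot_exprn_le0 n : dotL2 (fun t => g t - f t) (mono n) <= 0.
Proof.
apply: (le0_of_small (K := sqL2 (mono n) / 2) (d := 1)) => // e e0 _.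
have c0 : 0 <= c n + e by apply: addr_ge0 => //; exact: ltW.
have := proj_perturb (isL2_exprn n) (Aplus_rep_shift hA c0); nra.
Qed.

Lemma proj_dot_exprn_eq0 n : 0 < c n -> dotL2 (fun t => g t - f t) (mono n) = 0.
Proof.
move=> cn; apply/eqP; rewrite eq_le proj_dot_exprn_le0 /= -oppr_le0.
apply: (le0_of_small (K := sqL2 (mono n) / 2) (d := c n)) => // e e0 ec.
have c0 : 0 <= c n + - e by lra.
have := proj_perturb (isL2_exprn n) (Aplus_rep_shift hA c0); nra.
Qed.

Lemma proj_dot_ge0 : 0 <= dotL2 (fun t => g t - f t) f.
Proof.
rewrite -oppr_le0; apply: (le0_of_small (K := sqL2 f / 2) (d := 1)) => // e e0 e1.
have := Aplus_repZ (s := 1 - e) _ hA.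
have -> : (fun t => (1 - e) * f t) = (fun t => f t + - e * f t).
  by apply: funext => t; ring.
have e1' : 0 <= 1 - e by lra.
by move=> /(_ e1')/(proj_perturb Lf); nra.
Qed.

(* With u = g - f and v = g - q,
   |f - q|^2 = <v, f> - <v, q> - <u, f> + <u, q> and every term is <= 0. *)
Lemma proj_kkt_unique (d : nat -> R) q : Aplus_rep d q ->
  (forall n, dotL2 (fun t => g t - q t) (mono n) <= 0) ->
  0 <= dotL2 (fun t => g t - q t) q ->
  forall h, isL2 h -> dotL2 f h = dotL2 q h.
Proof.
move=> hq qn q_ge0 h Lh; have Lq : isL2 q by case: hq => _ [].
have Lv : isL2 (fun t => g t - q t) by exact: isL2B.
have Lfq : isL2 (fun t => f t - q t) by exact: isL2B.
have uq := Aplus_rep_dot_le0 Lu proj_dot_exprn_le0 hq.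
have vf := Aplus_rep_dot_le0 Lv qn hA.
have uf := proj_dot_ge0.
suff Q0 : sqL2 (fun t => f t - q t) = 0.
  by have := dotL2_eq0 Lfq Lh Q0; rewrite dotL2Bl //; lra.
apply/eqP; rewrite eq_le sqL2_ge0 andbT.
by move: uq vf uf q_ge0; rewrite !dotL2Bl // !dotL2Br // (dotL2C q f); lra.
Qed.

End Projection.

End L2.

#[local] Hint Resolve isL2_exprn isL2_psi isL2_psum : core.

Section PsiProjection.
Variables (R : realType) (a : R) (c : nat -> R).
Hypothesis hc : proj_coeffs (psi a) c.
Local Notation mono n := (fun x : R => x ^+ n).

Lemma proj_psi_support_bound : -1 <= a < 1 ->
  supp c = [set 0%N; 1%N; 2%N] -> 0 < a /\ 5 * a ^+ 2 <= 1.
Proof.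
move=> a11 hs; have [f f_proj] := hc; have [[c0 [Lf _]] _] := f_proj.
have c_pos n : (n <= 2)%N -> 0 < c n.
  by move=> n2; have : supp c n by rewrite hs; case: n n2 => [|[|[|]]] //=; auto.
have c_vanish n : (3 <= n)%N -> c n = 0.
  move=> n3; apply/eqP; rewrite eq_le c0 andbT leNgt; apply/negP => cn.
  have : supp c n by [].
  by rewrite hs => -[[]|] n_eq; rewrite n_eq in n3.
have res n : dotL2 (fun t => psi a t - f t) (mono n) = resid_moment a c 3 n.
  by rewrite -dotL2_resid // !dotL2Bl ?(Aplus_rep_dot_trunc f_proj.1 c_vanish).
apply: (resid_quadratic_bound a11 (c_pos 2%N isT)).
- by move=> n n2; rewrite -res (proj_dot_exprn_eq0 (isL2_psi a) f_proj (c_pos n n2)).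
- by rewrite -res (proj_dot_exprn_le0 (isL2_psi a) f_proj).
Qed.

Lemma proj_psi_coef : 0 < a -> 5 * a ^+ 2 <= 1 -> forall n, c n = proj_coef a n.
Proof.
move=> a0 a5; have [f f_proj] := hc; have [[c0 [Lf _]] _] := f_proj.
have a11 : -1 <= a < 1 by apply/andP; split; nra.
have pc0 n : 0 <= proj_coef a n.
  by case: (leqP n 2) => [/(proj_coef_gt0 a0 a5)/ltW | ]; case: n => [|[|[|]]].
have pc_vanish n : (3 <= n)%N -> proj_coef a n = 0 by case: n => [|[|[|]]].
have res_q n : dotL2 (fun t => psi a t - psum (proj_coef a) 3 t) (mono n) =
               resid_moment a (proj_coef a) 3 n by exact: dotL2_resid.
have fq h : isL2 h -> dotL2 f h = dotL2 (psum (proj_coef a) 3) h.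
  apply: (proj_kkt_unique (isL2_psi a) f_proj (Aplus_rep_psum pc0 pc_vanish)).
    by move=> n; rewrite res_q resid_proj_le0.
  rewrite dotL2C dotL2_psum; last exact: isL2B.
  rewrite big_nat big1 // => j /andP [_ j3].
  by rewrite dotL2C res_q resid_proj_small ?mulr0.
have c_vanish n : (4 <= n)%N -> c n = 0.
  move=> n4; apply/eqP; rewrite eq_le c0 andbT leNgt; apply/negP => cn.
  have := proj_dot_exprn_eq0 (isL2_psi a) f_proj cn.
  rewrite dotL2Bl // fq // -dotL2Bl // res_q; apply/eqP.
  by rewrite lt_eqF ?resid_proj_lt0.
have c_low : forall j, (j < 4)%N -> c j = proj_coef a j.
  apply: moment_gram_inj => k _; rewrite -!dotL2_psum_exprn.
  rewrite -(Aplus_rep_dot_trunc f_proj.1 c_vanish) // fq //; congr dotL2.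
  by apply: funext => t; rewrite (psum_trunc _ pc_vanish).
move=> n; case: (ltnP n 4) => [/c_low // | n4].
by rewrite c_vanish // pc_vanish // ltnW.
Qed.

End PsiProjection.

Theorem proposition1p9 (R : realType) (a : R) (ha : -1 <= a < 1)
  (c : nat -> R) (hc : proj_coeffs (psi a) c) :
  (supp c = [set 0%N; 1%N; 2%N] <-> 0 < a <= 1 / Num.sqrt 5) /\
  (0 < a <= 1 / Num.sqrt 5 ->
     c 0%N = (4 - 9 * a + 5 * a ^+ 3) / 8 /\
     c 1%N = 3 / 4 * (1 - a ^+ 2) /\
     c 2%N = 15 / 8 * (a - a ^+ 3) /\
     (forall n, (3 <= n)%N -> c n = 0)).
Proof.
have sqrt5E : 0 < a <= 1 / Num.sqrt 5 <-> 0 < a /\ 5 * a ^+ 2 <= 1.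
  by split=> [/andP [a0] | [a0]]; rewrite (le_inv_sqrt5 (ltW a0)) => a5; [|apply/andP].
split.
- rewrite sqrt5E; split; first exact: proj_psi_support_bound.
  move=> [a0 a5]; apply/seteqP; split=> n; rewrite /supp /= (proj_psi_coef hc a0 a5).
    by case: n => [|[|[|n]]] /=; rewrite ?ltxx; auto.
  by move=> [[]|] ->; apply: proj_coef_gt0.
- rewrite sqrt5E => -[a0 a5]; rewrite !(proj_psi_coef hc a0 a5).
  by do 2!split=> //; split=> // n n3; rewrite (proj_psi_coef hc a0 a5);
     case: n n3 => [|[|[|]]].
Qed.
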